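(* There exist two disjoint thin sets $T_0,T_1\subseteq\mathbb{Z}_2^\omega$, neither of which is Borel, such that $T_0\cup T_1=\mathbb{Z}_2^\omega$.
   Context: $\mathbb{Z}_2^\omega$ is the Cantor cube of infinite binary sequences indexed by $\omega=\{0,1,2,\dots\}$, with the product topology. A set $T\subseteq\mathbb{Z}_2^\omega$ is thin if for every $n\in\omega$ the map $x\mapsto x|_{\omega\setminus\{n\}}$ is injective on $T$ (equivalently, no two distinct elements of $T$ differ in exactly one coordinate). *)

From HB Require Import structures.
From mathcomp Require Import all_boot all_order all_algebra.
From mathcomp Require Import all_classical all_reals all_analysis.
Set Implicit Arguments. Unset Strict Implicit. Unset Printing Implicit Defensive.
Local Open Scope classical_set_scope.

(* Z_2^omega = cantor_space = bool^nat with the product topology. *)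

Definition borel_set (A : set cantor_space) : Prop :=
  <<s [set U : set cantor_space | open U] >> A.

Definition restr_away (n : nat) (x : cantor_space) : {k : nat | k <> n} -> bool :=
  fun k => x (proj1_sig k).

Arguments restr_away : clear implicits.

Definition thin (T : set cantor_space) : Prop :=
  forall (n : nat) (x y : cantor_space),
    T x -> T y -> restr_away n x = restr_away n y -> x = y.

From mathcomp Require Import all_boot all_classical all_analysis.
Local Open Scope classical_set_scope.

(* Choose a representative [rep x] of the E_0-class of each x (the sequences
   that eventually agree with x), and let T_0 be the set of x differing from
   [rep x] in an even number of coordinates, T_1 its complement. Flipping one
   coordinate keeps the E_0-class and changes that parity, so it maps T_0 onto
   T_1; in particular both sets are thin. Borel sets have the Baire property,
   but a set A that every coordinate flip maps onto its complement does not: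
   the Baire property would make A or its complement meager in some cylinder,
   whereas flipping the first free coordinate maps that cylinder onto itself
   and exchanges A with its complement, so the cylinder itself would be meager,
   contradicting the Baire category theorem. *)

Definition agree (x y : cantor_space) n := forall i, (i < n)%N -> x i = y i.

Definition cyl (x : cantor_space) n : set cantor_space := [set z | agree z x n].

Lemma cylS x {m n} : (m <= n)%N -> cyl x n `<=` cyl x m.
Proof. by move=> mn z xz i im; apply: xz; exact: leq_trans mn. Qed.

Lemma cyl_sub x y n : cyl x n y -> cyl y n `<=` cyl x n.
Proof. by move=> xy z yz i ni; rewrite yz // xy. Qed.

Lemma cyl_open x n : open (cyl x n).
Proof.
elim: n => [|n IHn].
  have -> : cyl x 0 = setT by rewrite eqEsubset; split=> // z _ i.
  exact: openT.
rewrite (_ : cyl x n.+1 = cyl x n `&` proj n @^-1` [set x n]).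
  apply: openI => //; apply: open_comp; last exact: discrete_open.
  by move=> z _; exact: proj_continuous.
rewrite eqEsubset; split=> z.
  by move=> xz; split; [exact: cylS xz|exact: xz].
by move=> [xz zn] i; rewrite ltnS leq_eqVlt => /predU1P[->|]; [exact: zn|exact: xz].
Qed.

Lemma nbhs_cyl {x} {B : set cantor_space} : nbhs x B -> exists n, cyl x n `<=` B.
Proof.
move=> Bx; apply: contrapT => /forallNP noB.
have /choice[y yP] n : exists y, cyl x n y /\ ~ B y.
  by have /existsNP[y /not_implyP] := noB n; exists y.
have y_x : y @ \oo --> x.
  apply/pointwise_cvgP => i A /= /nbhs_singleton Axi.
  by exists i.+1 => // k /= ik; rewrite (proj1 (yP k) i).
have [N _ yB] := y_x _ Bx.
exact: (proj2 (yP N)) (yB N (leqnn N)).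
Qed.

Definition flip (i : nat) (x : cantor_space) : cantor_space :=
  fun j => if j == i then ~~ x j else x j.

Lemma flipK i : involutive (flip i).
Proof. by move=> x; apply/funext => j; rewrite /flip; case: eqP => // _; rewrite negbK. Qed.

Lemma flip_cylE i x n : flip i @^-1` cyl (flip i x) n = cyl x n.
Proof.
rewrite eqEsubset; split=> z zx j jn; last by rewrite /flip zx.
by move: (zx j jn); rewrite /flip; case: (j == i) => // /negb_inj.
Qed.

Lemma flip_cyl i x n : (n <= i)%N -> cyl x n `<=` flip i @^-1` cyl x n.
Proof. by move=> ni z xz j jn; rewrite /flip ltn_eqF ?xz //; exact: leq_trans jn ni. Qed.

Definition nowhere_dense (F : set cantor_space) :=
  forall x n, exists y m, cyl y m `<=` cyl x n `\` F.

Definition meager (M : set cantor_space) :=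
  exists2 F : nat -> set cantor_space,
    forall k, nowhere_dense (F k) & M `<=` \bigcup_k F k.

Lemma nowhere_dense0 : nowhere_dense set0.
Proof. by move=> x n; exists x, n; rewrite setD0. Qed.

Lemma meager0 : meager set0.
Proof. by exists (fun=> set0) => // _; exact: nowhere_dense0. Qed.

Lemma meagerS A B : A `<=` B -> meager B -> meager A.
Proof. by move=> AB [F ndF BF]; exists F => //; exact: subset_trans BF. Qed.

Lemma meager_bigcup (A : nat -> set cantor_space) :
  (forall k, meager (A k)) -> meager (\bigcup_k A k).
Proof.
move=> mA.
have /choice[F FP] k : exists F : nat -> set cantor_space,
    (forall j, nowhere_dense (F j)) /\ A k `<=` \bigcup_j F j.
  by have [F ? ?] := mA k; exists F.
exists (fun n => if unpickle n is Some (k, j) then F k j else set0).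
  move=> n; case: unpickle => [[k j]|]; last exact: nowhere_dense0.
  exact: (proj1 (FP k)).
move=> x [k _ /(proj2 (FP k))[j _ Fx]].
by exists (pickle (k, j)) => //; rewrite pickleK.
Qed.

Lemma meagerU A B : meager A -> meager B -> meager (A `|` B).
Proof.
move=> mA mB; apply: (@meagerS _ (\bigcup_k (if k is 0 then A else B))).
  by move=> x [Ax|Bx]; [exists 0|exists 1].
by apply: meager_bigcup => -[].
Qed.

Lemma nowhere_dense_flip i F : nowhere_dense F -> nowhere_dense (flip i @^-1` F).
Proof.
move=> ndF x n; have [y [m ym]] := ndF (flip i x) n.
exists (flip i y), m => z; rewrite -(flip_cylE i) flipK => /ym[xz Fz].
by split; first by rewrite -(flip_cylE i).
Qed.

Lemma meager_flip i M : meager M -> meager (flip i @^-1` M).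
Proof.
move=> [F ndF MF]; exists (fun k => flip i @^-1` F k) => [k|x /MF//].
exact: nowhere_dense_flip.
Qed.

Lemma nowhere_dense_refine {F} x n k : nowhere_dense F ->
  exists y m, (k < m)%N /\ cyl y m `<=` cyl x n `\` F.
Proof.
move=> /(_ x n)[y [m ym]]; exists y, (maxn m k.+1).
by split; [rewrite leq_max ltnSn orbT|exact: subset_trans (cylS y (leq_maxl m k.+1)) ym].
Qed.

Lemma nested_cyl_meet (y : nat -> cantor_space) (m : nat -> nat) :
  (forall k, (k < m k)%N) ->
  (forall k, cyl (y k.+1) (m k.+1) `<=` cyl (y k) (m k)) ->
  exists z, forall k, cyl (y k) (m k) z.
Proof.
move=> km nested.
have sub j k : (j <= k)%N -> cyl (y k) (m k) `<=` cyl (y j) (m j).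
  elim: k => [|k IHk]; first by rewrite leqn0 => /eqP ->.
  by rewrite leq_eqVlt => /predU1P[-> //|/IHk]; exact: subset_trans (nested k).
exists (fun i => y i i) => k i ik.
have [ki|ik'] := leqP k i; first exact: sub ki _ (fun _ _ => erefl) i ik.
by apply/esym; exact: sub (ltnW ik') _ (fun _ _ => erefl) i (km i).
Qed.

Theorem cyl_not_meager x n : ~ meager (cyl x n).
Proof.
move=> [F ndF cover].
pose P k (p q : cantor_space * nat) := (k < q.2)%N /\ cyl q.1 q.2 `<=` cyl p.1 p.2 `\` F k.
have nextP k p : P k p (get (P k p)).
  have [y [m ?]] := nowhere_dense_refine p.1 p.2 k (ndF k).
  by apply: getPex; exists (y, m).
pose s := fix s k := if k is k'.+1 then get (P k (s k')) else get (P 0 (x, n)).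
have sP k : P k (if k is k'.+1 then s k' else (x, n)) (s k) by case: k.
have [z zs] := nested_cyl_meet (fun k => (s k).1) (fun k => (s k).2)
  (fun k => proj1 (sP k)) (fun k => subset_trans (proj2 (sP k.+1)) (@subDsetl _ _ _)).
have [k _ Fz] := cover z (proj2 (sP 0) z (zs 0)).1.
by have [_ /(_ z (zs k))[]] := sP k.
Qed.

Definition baire_property (A : set cantor_space) :=
  exists U M, [/\ open U, meager M & forall x, ~ M x -> (A x <-> U x)].

Lemma open_baire_property U : open U -> baire_property U.
Proof. by move=> oU; exists U, set0; split=> //; exact: meager0. Qed.

Lemma nowhere_dense_setD_interior C : closed C -> nowhere_dense (C `\` C°).
Proof.
move=> cC x n.
have [[y [xy nCy]]|noC] := pselect (exists y, cyl x n y /\ ~ C y).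
  have [m yC] := nbhs_cyl (open_nbhs_nbhs (conj (closed_openC cC) nCy)).
  exists y, (maxn m n) => z yz; split.
    by apply: cyl_sub xy _ _; exact: cylS (leq_maxr m n) _ yz.
  by move=> [/yC + _]; apply; exact: cylS (leq_maxl m n) _ yz.
have xC : cyl x n `<=` C.
  by move=> z xz; apply: contrapT => nCz; apply: noC; exists z.
have xIC : cyl x n `<=` C°.
  by rewrite -(proj1 (interior_id _) (cyl_open x n)); exact: interiorS.
by exists x, n => z xz; split=> // -[_]; apply; exact: xIC.
Qed.

Lemma baire_propertyC A : baire_property A -> baire_property (~` A).
Proof.
move=> [U [M [oU mM AU]]].
exists (~` U)°, (M `|` (~` U `\` (~` U)°)); split.
- exact: open_interior.
- apply: meagerU => //; exists (fun=> ~` U `\` (~` U)°) => [_|x Nx]; last by exists 0.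
  by apply: nowhere_dense_setD_interior; rewrite closedC.
move=> x /not_orP[nMx nNx]; split=> [nAx|/interior_subset nUx Ax]; last first.
  by apply: nUx; exact/(AU x nMx).
apply: contrapT => nIx; apply: nNx; split=> // Ux; apply: nAx; exact/(AU x nMx).
Qed.

Lemma baire_property_bigcup (A : nat -> set cantor_space) :
  (forall k, baire_property (A k)) -> baire_property (\bigcup_k A k).
Proof.
move=> bpA.
have /choice[UM UMP] k : exists UM : set cantor_space * set cantor_space,
    [/\ open UM.1, meager UM.2 & forall x, ~ UM.2 x -> (A k x <-> UM.1 x)].
  by have [U [M ?]] := bpA k; exists (U, M).
exists (\bigcup_k (UM k).1), (\bigcup_k (UM k).2); split.
- by apply: bigcup_open => k _; have [] := UMP k.
- by apply: meager_bigcup => k; have [] := UMP k.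
move=> x nMx; have AUx k : A k x <-> (UM k).1 x.
  by have [_ _ ->] := UMP k => // Mx; apply: nMx; exists k.
by split=> -[k _ /AUx ?]; exists k.
Qed.

Lemma borel_baire_property A : borel_set A -> baire_property A.
Proof.
move=> bA; apply: (smallest_sub (C := sigma_algebra setT)) bA => [|U /open_baire_property//].
split.
- exact/open_baire_property/open0.
- by move=> B bpB; rewrite setTD; exact: baire_propertyC.
- exact: baire_property_bigcup.
Qed.

Definition flip_toggles (A : set cantor_space) := forall i x, A (flip i x) <-> ~ A x.

Lemma flip_togglesC {A} : flip_toggles A -> flip_toggles (~` A).
Proof. by move=> fA i x; split=> [nAf nAx|nnAx /fA//]; apply: nAf; exact/fA. Qed.

Lemma restr_away_eq n x y : restr_away n x = restr_away n y -> y = x \/ y = flip n x.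
Proof.
move=> xy; have {}xy k : k <> n -> x k = y k.
  by move=> kn; have := congr1 (fun f => f (exist _ k kn)) xy.
have [xyn|xyn] := eqVneq (x n) (y n); [left|right]; apply/funext => k; rewrite /flip;
  (have [->|kn] := eqVneq k n; last by rewrite ?(negbTE kn) xy //; exact/eqP).
  by rewrite xyn.
by move: xyn; case: (x n); case: (y n).
Qed.

Lemma flip_toggles_thin A : flip_toggles A -> thin A.
Proof. by move=> fA n x y Ax Ay /restr_away_eq[->//|yx]; move: Ay; rewrite yx => /fA. Qed.

Lemma flip_toggles_cyl_not_meager {B} x n : flip_toggles B -> ~ meager (cyl x n `&` B).
Proof.
move=> fB mB; apply: (cyl_not_meager x n).
apply: (@meagerS _ ((cyl x n `&` B) `|` flip n @^-1` (cyl x n `&` B))); last first.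
  by apply: meagerU => //; exact: meager_flip.
move=> z xz; have [Bz|nBz] := pselect (B z); [left|right] => //.
by split; [exact: flip_cyl (leqnn n) _ xz|exact/fB].
Qed.

Lemma flip_toggles_not_baire A : flip_toggles A -> ~ baire_property A.
Proof.
move=> fA [U [M [oU mM AU]]].
have [[x Ux]|noU] := pselect (exists x, U x).
  have [n xU] := nbhs_cyl (open_nbhs_nbhs (conj oU Ux)).
  apply: (flip_toggles_cyl_not_meager x n (flip_togglesC fA)); apply: meagerS mM.
  by move=> z [/xU Uz nAz]; apply: contrapT => nMz; apply: nAz; exact/(AU z nMz).
apply: (flip_toggles_cyl_not_meager point 0 fA); apply: meagerS mM.
by move=> z [_ Az]; apply: contrapT => nMz; apply: noU; exists z; exact/(AU z nMz).
Qed.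

Lemma count_iota_stable (p : pred nat) N M : (N <= M)%N ->
  (forall i, (N <= i)%N -> ~~ p i) -> count p (iota 0 M) = count p (iota 0 N).
Proof.
move=> NM pN; rewrite -(subnKC NM) iotaD count_cat add0n -[RHS]addn0; congr (_ + _).
rewrite -(count_pred0 (iota N (M - N))); apply: eq_in_count => i.
by rewrite mem_iota => /andP[Ni _]; exact/negbTE/pN.
Qed.

Lemma odd_count_iota_toggle (p q : pred nat) i N :
  (forall j, j != i -> q j = p j) -> q i = ~~ p i ->
  odd (count q (iota 0 N)) = odd (count p (iota 0 N)) (+) (i < N)%N.
Proof.
move=> qp qi; elim: N => [//|N IHN].
rewrite -addn1 iotaD !count_cat !oddD IHN add0n /= !addbF !oddb addn1 ltnS.
have [<-|iN] := eqVneq i N; first by rewrite qi ltnn leqnn addbF addbN addbT.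
by rewrite qp 1?eq_sym // ltn_neqAle iN addbAC.
Qed.

Definition E0 (x y : cantor_space) := exists N, forall i, (N <= i)%N -> x i = y i.

Definition rep (x : cantor_space) : cantor_space := get (E0 x).

Lemma E0_rep x : E0 x (rep x).
Proof. by apply: getPex; exists x, 0. Qed.

Lemma rep_E0 x y : E0 x y -> rep x = rep y.
Proof.
move=> [N xy]; rewrite /rep; congr get; apply/funext => z; apply/propext.
by split=> -[M hM]; exists (maxn N M) => i;
  rewrite geq_max => /andP[/xy xyi /hM]; rewrite xyi.
Qed.

Definition diff_rep (x : cantor_space) : pred nat := fun i => x i != rep x i.

Definition even_diff_rep : set cantor_space := [set x | exists2 N,
  forall i, (N <= i)%N -> x i = rep x i & ~~ odd (count (diff_rep x) (iota 0 N))].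

Lemma even_diff_repE {x N} : (forall i, (N <= i)%N -> x i = rep x i) ->
  even_diff_rep x <-> ~~ odd (count (diff_rep x) (iota 0 N)).
Proof.
move=> xN; split=> [[M xM]|]; last by exists N.
have stable K : (K <= maxn N M)%N -> (forall i, (K <= i)%N -> x i = rep x i) ->
    count (diff_rep x) (iota 0 (maxn N M)) = count (diff_rep x) (iota 0 K).
  by move=> KNM xK; apply: count_iota_stable => // i Ki; rewrite negbK xK.
by rewrite -(stable M (leq_maxr N M) xM) (stable N (leq_maxl N M) xN).
Qed.

Lemma flip_toggles_even_diff_rep : flip_toggles even_diff_rep.
Proof.
move=> i x.
have rep_flip : rep (flip i x) = rep x.
  by apply/esym/rep_E0; exists i.+1 => j ij; rewrite /flip gtn_eqF.
have [N xN] := E0_rep x; pose M := maxn N i.+1.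
have xM j : (M <= j)%N -> x j = rep x j.
  by rewrite geq_max => /andP[/xN].
have fxM j : (M <= j)%N -> flip i x j = rep (flip i x) j.
  by rewrite rep_flip geq_max => /andP[/xN xj ij]; rewrite /flip (gtn_eqF ij).
rewrite (even_diff_repE fxM) (even_diff_repE xM).
rewrite (@odd_count_iota_toggle (diff_rep x) _ i).
- by rewrite (leq_trans _ (leq_maxr N i.+1)) // addbT; case: odd; split.
- by move=> j ji; rewrite /diff_rep rep_flip /flip (negbTE ji).
- by rewrite /diff_rep rep_flip /flip eqxx; case: (x i); case: (rep x i).
Qed.

Theorem corollary14 :
  exists T0 T1 : set cantor_space,
    T0 `&` T1 = set0 /\ thin T0 /\ thin T1 /\
    ~ borel_set T0 /\ ~ borel_set T1 /\
    T0 `|` T1 = [set: cantor_space].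
Proof.
have not_borel A : flip_toggles A -> ~ borel_set A.
  by move=> fA /borel_baire_property; exact: flip_toggles_not_baire.
have fT := flip_toggles_even_diff_rep; have fTC := flip_togglesC fT.
exists even_diff_rep, (~` even_diff_rep).
split; first exact: setICr.
split; first exact: flip_toggles_thin.
split; first exact: flip_toggles_thin.
split; first exact: not_borel.
split; first exact: not_borel.
exact: setUCr.
Qed.
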